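(* Let $\theta$ be a primitive aperiodic quasi-bijective substitution in simplified form, with notation as in the context. Then $S^{(2)}_\theta$ is invariant under diagonal right multiplication by elements of $\mathcal H_{-+}\cup\mathcal H_+$, i.e. $(L,R)\in S^{(2)}_\theta$ and $\psi\in\mathcal H_{-+}\cup\mathcal H_+$ imply $(L\psi,R\psi)\in S^{(2)}_\theta$. Furthermore, for every $\phi\in\mathcal H_{+-}$, the map $(L,R)\mapsto(L\phi,R\phi)$ is a bijection from $S^{(2)}_\theta$ onto the set $S^{(2,-)}_\theta$ of consecutive pairs $(L,R)\in\mathcal H_-\times\mathcal H_{+-}$.
   Context: A substitution $\theta$ of constant length $\ell$ on a finite alphabet $\mathcal A$ is given by maps $\theta_0,\dots,\theta_{\ell-1}:\mathcal A\to\mathcal A$ with $\theta(a)=\theta_0(a)\cdots\theta_{\ell-1}(a)$; the column maps $(\theta^n)_i$, $0\le i<\ell^n$, of $\theta^n$ are obtained by $(\theta\theta')_{i+\ell j}=\theta_i\theta'_j$ (composition of maps). The column rank $c$ is the minimum over $n,i$ of $|(\theta^n)_i(\mathcal A)|$. $\theta$ is quasi-bijective if for some power each column map has rank $c$; it is in simplified form if each $\theta_i$ has rank $c$ and every $\theta$-periodic point is $\theta$-fixed, so that $e_+:=\theta_0$ and $e_-:=\theta_{\ell-1}$ are idempotent maps. $S_\theta$ is the semigroup of maps $\mathcal A\to\mathcal A$ generated by all column maps of all $\theta^n$, $n\ge1$; it is completely simple and $e_\pm$ are minimal idempotents. $\mathcal H_+=e_+S_\theta e_+$ and $\mathcal H_-=e_-S_\theta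 e_-$ are groups; $e_{+-}$ is the unique idempotent in the group $\mathcal H_{+-}$ containing $e_+e_-$ (the intersection of the right ideal class of $e_+$ and left ideal class of $e_-$), and $e_{-+}$, $\mathcal H_{-+}$ are defined symmetrically (containing $e_-e_+$). Two elements $L,R\in S_\theta$ are consecutive if $L=(\theta^n)_{i-1}$, $R=(\theta^n)_i$ for some $n>0$, $0<i<\ell^n$. $S^{(2)}_\theta$ is the set of consecutive pairs $(L,R)\in\mathcal H_{-+}\times\mathcal H_+$. *)

From mathcomp Require Import all_boot all_order all_algebra.
Set Implicit Arguments. Unset Strict Implicit. Unset Printing Implicit Defensive.
Import GRing.Theory Num.Theory.

(* A substitution of constant length l on the finite alphabet A is given by
   its column maps th : 'I_l -> {ffun A -> A}, theta(a) = th_0(a) ... th_{l-1}(a). *)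

Section Subst.
Variables (A : finType) (l : nat) (th : 'I_l -> {ffun A -> A}).

Definition idf : {ffun A -> A} := [ffun a => a].
Definition compf (f g : {ffun A -> A}) : {ffun A -> A} := [ffun a => f (g a)].

Definition thn (i : nat) : {ffun A -> A} :=
  if insub i is Some o then th o else idf.

(* colmap n k = (theta^n)_k, using (theta theta')_{i + l j} = theta_i theta'_j *)
Fixpoint colmap (n k : nat) : {ffun A -> A} :=
  match n with
  | 0 => idf
  | n'.+1 => compf (thn (k %% l)) (colmap n' (k %/ l))
  end.

Definition rank (f : {ffun A -> A}) : nat := #|[set f a | a : A]|.

Definition word (n : nat) (a : A) : seq A := [seq colmap n k a | k <- iota 0 (l ^ n)].

Definition legal (w : seq A) : Prop := exists n a, infix w (word n a).

Definition inX (x : int -> A) : Prop :=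
  forall (m : int) (len : nat), legal [seq x (m + i%:Z)%R | i <- iota 0 len].

(* action of theta^n on bi-infinite sequences: (theta^n x)_{l^n z + k} = (theta^n)_k (x_z) *)
Definition sapply (n : nat) (x : int -> A) : int -> A :=
  fun z => colmap n `|(z %% (l ^ n)%:Z)%Z|%N (x (z %/ (l ^ n)%:Z)%Z).

Definition primitive : Prop :=
  exists n, 0 < n /\ forall a b : A, exists k, k < l ^ n /\ colmap n k a = b.

Definition aperiodic : Prop :=
  forall x, inX x -> forall p : nat, 0 < p -> ~ (forall z : int, x (z + p%:Z)%R = x z).

Definition is_colrank (c : nat) : Prop :=
  (exists n k, [/\ 0 < n, k < l ^ n & rank (colmap n k) = c]) /\
  (forall n k, 0 < n -> k < l ^ n -> c <= rank (colmap n k)).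

Definition quasi_bijective : Prop :=
  exists c, is_colrank c /\
    exists n, 0 < n /\ forall k, k < l ^ n -> rank (colmap n k) = c.

Definition periodic_point (x : int -> A) : Prop :=
  inX x /\ exists p, 0 < p /\ sapply p x =1 x.
Definition fixed_point (x : int -> A) : Prop := sapply 1 x =1 x.

Definition simplified : Prop :=
  (exists c, is_colrank c /\ forall i, rank (th i) = c) /\
  (forall x, periodic_point x -> fixed_point x).

Inductive inS : {ffun A -> A} -> Prop :=
  | inS_col n k : 0 < n -> k < l ^ n -> inS (colmap n k)
  | inS_mul f g : inS f -> inS g -> inS (compf f g).

Definition inS1 f := f = idf \/ inS f.

Definition Rrel f g := (exists u, inS1 u /\ f = compf g u) /\ (exists v, inS1 v /\ g = compf f v).
Definition Lrel f g := (exists u, inS1 u /\ f = compf u g) /\ (exists v, inS1 v /\ g = compf v f).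

Definition ep : {ffun A -> A} := thn 0.
Definition em : {ffun A -> A} := thn l.-1.

Definition inHp f := exists s, inS s /\ f = compf ep (compf s ep).
Definition inHm f := exists s, inS s /\ f = compf em (compf s em).
Definition inHpm f := inS f /\ Rrel f ep /\ Lrel f em.
Definition inHmp f := inS f /\ Rrel f em /\ Lrel f ep.

Definition consecutive (L R : {ffun A -> A}) : Prop :=
  exists n i, [/\ 0 < n, 0 < i, i < l ^ n, L = colmap n i.-1 & R = colmap n i].

Definition inS2 (p : {ffun A -> A} * {ffun A -> A}) : Prop :=
  consecutive p.1 p.2 /\ inHmp p.1 /\ inHp p.2.
Definition inS2m (p : {ffun A -> A} * {ffun A -> A}) : Prop :=
  consecutive p.1 p.2 /\ inHm p.1 /\ inHpm p.2.

End Subst.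

From mathcomp Require Import all_boot all_order all_algebra.
From mathcomp Require Import zify.
Set Implicit Arguments. Unset Strict Implicit. Unset Printing Implicit Defensive.

(* The column maps of theta have rank c, the column rank, so every element of
   S_theta has rank exactly c.  In a semigroup of maps of constant rank,
   composition never loses image on the left nor kernel on the right; hence
   f R g iff img f = img g, f L g iff ker f = ker g, and every element has an
   idempotent power with the same image and kernel.  The groups H_+, H_-,
   H_{+-} and H_{-+} are therefore the sets of elements with prescribed image
   (that of e_+ or e_-) and prescribed kernel (that of e_+ or e_-).
   Right multiplication by psi in S_theta keeps images, replaces kernels by
   ker psi, and keeps pairs consecutive (psi is a column of some theta^m);
   this gives the invariance and that (L, R) |-> (L phi, R phi) lands in
   S^(2,-).  It is injective because maps with kernel ker e_+ are determined on
   img e_+ = img phi, and surjective because some psi with ker psi = ker e_+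
   turns psi phi into an idempotent with kernel ker e_-, a right identity on
   H_- and H_{+-}. *)

Section MapMonoid.
Variable A : finType.
Local Notation F := {ffun A -> A}.

Lemma compfA (f g h : F) : compf f (compf g h) = compf (compf f g) h.
Proof. by apply/ffunP => a; rewrite !ffunE. Qed.

Lemma comp1f (f : F) : compf (idf A) f = f.
Proof. by apply/ffunP => a; rewrite !ffunE. Qed.

Lemma compf1 (f : F) : compf f (idf A) = f.
Proof. by apply/ffunP => a; rewrite !ffunE. Qed.

Definition img (f : F) := [set f a | a : A].
Definition eqker (f g : F) := forall a b, (f a == f b) = (g a == g b).

Lemma img_compf (f g : F) : img (compf f g) = f @: img g.
Proof. by rewrite /img -imset_comp; apply: eq_imset => a; rewrite ffunE. Qed.

Lemma img_compf_sub (f g : F) : img (compf f g) \subset img f.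
Proof. by apply/subsetP => y /imsetP [a _ ->]; rewrite ffunE imset_f. Qed.

Lemma rank_compf_sub (f g : F) : rank (compf f g) <= rank g.
Proof. by rewrite /rank -/(img _) img_compf leq_imset_card. Qed.

Lemma rank_compf_subl (f g : F) : rank (compf f g) <= rank f.
Proof. exact: subset_leq_card (img_compf_sub f g). Qed.

Lemma img_compf_rank (f g : F) : rank (compf f g) = rank f -> img (compf f g) = img f.
Proof. by move=> h; apply/eqP; rewrite eqEcard img_compf_sub /= /rank in h *; rewrite h. Qed.

Lemma eqker_compf_rank (u g : F) : rank (compf u g) = rank g -> eqker (compf u g) g.
Proof.
rewrite /rank -/(img _) -/(img g) img_compf => /eqP /imset_injP inj a b.
apply/eqP/eqP => [|h]; last by rewrite !ffunE h.
by rewrite !ffunE => /inj; apply; apply: imset_f.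
Qed.

Lemma idemP (e : F) a : compf e e = e -> e (e a) = e a.
Proof. by move/ffunP/(_ a); rewrite ffunE. Qed.

Lemma idem_compf_img (e f : F) : compf e e = e -> img f \subset img e -> compf e f = f.
Proof.
move=> ee /subsetP sfe; apply/ffunP => a; rewrite ffunE.
have : f a \in img e by apply: sfe; apply: imset_f.
by case/imsetP => b _ ->; rewrite idemP.
Qed.

Lemma compf_idem_eqker (e f : F) : compf e e = e -> eqker f e -> compf f e = f.
Proof. by move=> ee kfe; apply/ffunP => a; rewrite ffunE; apply/eqP; rewrite kfe idemP. Qed.

Definition powf n (f : F) := iter n (compf f) (idf A).

Lemma powfS n f : powf n.+1 f = compf f (powf n f). Proof. by []. Qed.

Lemma powfD m n f : powf (m + n) f = compf (powf m f) (powf n f).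
Proof. by elim: m => [|m IH]; rewrite ?comp1f // addSn !powfS IH compfA. Qed.

Lemma powfSr n f : powf n.+1 f = compf (powf n f) f.
Proof. by rewrite -addn1 powfD /powf /= compf1. Qed.

Lemma powf_periodic i j f : i < j -> powf i f = powf j f ->
  forall t k, powf (i + t + k * (j - i)) f = powf (i + t) f.
Proof.
move=> ij e t; elim=> [|k IH]; first by rewrite mul0n addn0.
have -> : i + t + k.+1 * (j - i) = j + (t + k * (j - i)) by rewrite mulSn; lia.
by rewrite powfD -e -powfD addnA.
Qed.

(* The powers of f are eventually periodic (pigeonhole on the finite type F),
   and a positive multiple of the period beyond the preperiod is idempotent. *)
Lemma exists_idem_powf f : exists M, compf (powf M.+1 f) (powf M.+1 f) = powf M.+1 f.
Proof.
have [i [j [ij e]]] : exists i j, i < j /\ powf i f = powf j f.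
  pose G (i : 'I_(#|{: F}|).+1) := powf i f.
  have /injectivePn [i [j nij eij]] : ~~ injectiveb G.
    by apply/negP => /injectiveP /leq_card; rewrite card_ord ltnn.
  case: (ltngtP i j) => h; [by exists i, j | by exists j, i |].
  by move: nij; rewrite -val_eqE /= h eqxx.
exists ((i.+1 * (j - i)).-1).
have hp : 0 < i.+1 * (j - i) by rewrite muln_gt0 subn_gt0 ij.
rewrite prednK // -powfD.
have := powf_periodic ij e (i.+1 * (j - i) - i) i.+1.
by have -> : i + (i.+1 * (j - i) - i) = i.+1 * (j - i) by nia.
Qed.

End MapMonoid.

Lemma ltn_mixed_radix b n m i j : i < b ^ n -> j < b ^ m -> i + b ^ n * j < b ^ (n + m).
Proof.
move=> hi hj; rewrite expnD; apply: (@leq_trans (b ^ n * j.+1)).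
  by rewrite mulnS ltn_add2r.
by rewrite leq_mul2l hj orbT.
Qed.

Section Columns.
Variables (A : finType) (l : nat) (th : 'I_l -> {ffun A -> A}).
Hypothesis l_gt0 : 0 < l.
Local Notation S := (inS th).

Lemma colmapD n m i j : i < l ^ n ->
  colmap th (n + m) (i + l ^ n * j) = compf (colmap th n i) (colmap th m j).
Proof.
elim: n i => [|n IH] i hi.
  by move: hi; rewrite expn0 ltnS leqn0 => /eqP ->; rewrite /= add0n mul1n comp1f.
rewrite addSn /=.
have -> : (i + l ^ n.+1 * j) %/ l = i %/ l + l ^ n * j.
  by rewrite expnS -mulnA addnC mulnC divnMDl // mulnC addnC.
rewrite IH; last by rewrite ltn_divLR // mulnC -expnS.
by rewrite compfA expnS -mulnA addnC mulnC modnMDl.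
Qed.

Lemma inS_colmap f : S f -> exists n k, [/\ 0 < n, k < l ^ n & f = colmap th n k].
Proof.
elim=> [n k hn hk|f0 g _ [n [i [hn hi ->]]] _ [m [j [hm hj ->]]]].
  by exists n, k.
exists (n + m), (i + l ^ n * j); split; first by rewrite addn_gt0 hn.
  exact: ltn_mixed_radix.
by rewrite colmapD.
Qed.

Lemma inS_ep : S (ep th).
Proof.
have -> : ep th = colmap th 1 0 by rewrite /= mod0n compf1.
by apply: inS_col; rewrite // expn1.
Qed.

Lemma inS_em : S (em th).
Proof.
have -> : em th = colmap th 1 l.-1 by rewrite /= modn_small ?compf1 // prednK.
by apply: inS_col; rewrite // expn1 prednK.
Qed.

Lemma consecutive_compf L R psi : consecutive th L R -> S psi ->
  consecutive th (compf L psi) (compf R psi).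
Proof.
case=> n [i [hn hi hil -> ->]] /inS_colmap [m [j [hm hj ->]]].
exists (n + m), (i + l ^ n * j); split.
- by rewrite addn_gt0 hn.
- by rewrite addn_gt0 hi.
- exact: ltn_mixed_radix.
- have -> : (i + l ^ n * j).-1 = i.-1 + l ^ n * j by lia.
  by rewrite colmapD //; lia.
- by rewrite colmapD.
Qed.

Lemma inS_rank c : is_colrank th c -> (forall i, rank (th i) = c) ->
  forall f, S f -> rank f = c.
Proof.
move=> hc hrk f hf; apply/eqP; rewrite eqn_leq; apply/andP; split; last first.
  by case: (inS_colmap hf) => n [k [hn hk ->]]; apply: hc.2.
elim: hf => [n k hn hk|f0 g _ _ _ hg]; last exact: leq_trans (rank_compf_sub _ _) hg.
case: n hn hk => // n _ _ /=; apply: leq_trans (rank_compf_subl _ _) _.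
rewrite /thn; case: insubP => [o _ _|]; first by rewrite hrk.
by rewrite ltn_pmod.
Qed.

End Columns.

Section Green.
Variables (A : finType) (l : nat) (th : 'I_l -> {ffun A -> A}) (c : nat).
Hypothesis l_gt0 : 0 < l.
Hypothesis rank_inS : forall f, inS th f -> rank f = c.
Local Notation F := {ffun A -> A}.
Local Notation S := (inS th).
Local Notation ep := (ep th).
Local Notation em := (em th).

Lemma inS1_compf f p : S f -> inS1 th p -> S (compf f p).
Proof. by move=> hf [->|hp]; [rewrite compf1 | apply: inS_mul]. Qed.

Lemma inS1_compfl f p : S f -> inS1 th p -> S (compf p f).
Proof. by move=> hf [->|hp]; [rewrite comp1f | apply: inS_mul]. Qed.

Lemma inS1_powf n f : S f -> inS1 th (powf n f).
Proof.
move=> hf; elim: n => [|n IH]; first by left.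
by right; rewrite powfS; apply: inS1_compf.
Qed.

Lemma inS_powfS n f : S f -> S (powf n.+1 f).
Proof. by move=> hf; rewrite powfS; apply: inS1_compf (inS1_powf _ _). Qed.

Lemma img_compf_inS f g : S f -> S (compf f g) -> img (compf f g) = img f.
Proof. by move=> hf hfg; apply: img_compf_rank; rewrite !rank_inS. Qed.

Lemma eqker_compf_inS u g : S g -> S (compf u g) -> eqker (compf u g) g.
Proof. by move=> hg hug; apply: eqker_compf_rank; rewrite !rank_inS. Qed.

Lemma idem_powf_inS k : S k -> exists M, let e := powf M.+1 k in
  [/\ S e, compf e e = e, img e = img k & eqker e k].
Proof.
move=> hk; have [M hM] := exists_idem_powf k; exists M => e.
have Se : S e by apply: inS_powfS.
split=> //; first by rewrite /e powfS img_compf_inS // -powfS.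
by move=> a b; rewrite /e powfSr eqker_compf_inS // -powfSr.
Qed.

Definition inH (i k f : F) := [/\ S f, img f = img i & eqker f k].

Lemma inH_compf i k k' f psi : inH i k f -> S psi -> eqker psi k' -> inH i k' (compf f psi).
Proof.
case=> Sf imf _ Spsi kpsi; have Sfpsi : S (compf f psi) by apply: inS_mul.
split=> //; first by rewrite img_compf_inS.
by move=> a b; rewrite eqker_compf_inS // kpsi.
Qed.

Lemma Rrel_img f g : S f -> S g -> Rrel th f g <-> img f = img g.
Proof.
move=> Sf Sg; split.
  case=> [[u [_ ->]] [v [_ hv]]]; apply/eqP; rewrite eqEsubset img_compf_sub /=.
  by rewrite {1}hv img_compf_sub.
suff fact f' g' : S f' -> S g' -> img f' = img g' -> exists2 u, inS1 th u & f' = compf g' u.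
  move=> e; have [u hu efu] := fact f g Sf Sg e.
  have [v hv egv] := fact g f Sg Sf (esym e).
  by split; [exists u | exists v].
move=> Sf' Sg' efg; have Sgf : S (compf g' f') by apply: inS_mul.
have [M [_ ee ie _]] := idem_powf_inS Sgf.
(* The idempotent (g f)^(M+1) has image img f, so it fixes f. *)
exists (compf (compf f' (powf M (compf g' f'))) f').
  by right; apply: inS_mul => //; apply: inS1_compf => //; apply: inS1_powf.
rewrite compfA (compfA g') -powfS idem_compf_img // ie img_compf_inS //.
by rewrite -efg.
Qed.

Lemma Lrel_eqker f g : S f -> S g -> Lrel th f g <-> eqker f g.
Proof.
move=> Sf Sg; split.
  by case=> [[u [_ hu]] [v [_ hv]]] a b; apply/eqP/eqP => h;
    [rewrite hv !ffunE h | rewrite hu !ffunE h].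
suff fact f' g' : S f' -> S g' -> eqker f' g' -> exists2 u, inS1 th u & f' = compf u g'.
  move=> e; have e' : eqker g f by move=> a b; rewrite e.
  have [u hu efu] := fact f g Sf Sg e; have [v hv egv] := fact g f Sg Sf e'.
  by split; [exists u | exists v].
move=> Sf' Sg' efg; have Sfg : S (compf f' g') by apply: inS_mul.
have [M [_ ee _ ke]] := idem_powf_inS Sfg.
exists (compf f' (compf (powf M (compf f' g')) f')).
  by right; apply: inS_mul => //; apply: inS1_compfl => //; apply: inS1_powf.
rewrite -compfA -[compf (compf (powf _ _) f') g']compfA -powfSr.
rewrite compf_idem_eqker // => a b.
by rewrite ke eqker_compf_inS // efg.
Qed.

Lemma inH_Green i k f : S i -> S k ->
  S f /\ Rrel th f i /\ Lrel th f k <-> inH i k f.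
Proof.
move=> Si Sk; split; first by case=> Sf [/(Rrel_img Sf Si) imf /(Lrel_eqker Sf Sk)].
by case=> Sf imf kf; split; last split; [| apply/(Rrel_img Sf Si) | apply/(Lrel_eqker Sf Sk)].
Qed.

Lemma inH_sandwich k f : S k -> (exists s, S s /\ f = compf k (compf s k)) <-> inH k k f.
Proof.
move=> Sk; split.
  case=> s [Ss ->]; have Ssk : S (compf s k) by apply: inS_mul.
  have Hk : inH k k k by split=> // a b.
  exact: inH_compf Hk Ssk (eqker_compf_inS Sk Ssk).
case=> Sf imf kf; have [M [_ ee ie ke]] := idem_powf_inS Sk.
exists (compf (powf M k) (compf f (powf M k))); split.
  by apply: inS1_compfl (inS1_powf _ _) => //; apply: inS1_compf (inS1_powf _ _).
rewrite (compfA k) (compfA k) -powfS -compfA -compfA -powfSr.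
have kfe : eqker f (powf M.+1 k) by move=> a b; rewrite kf ke.
by rewrite (compf_idem_eqker ee kfe) idem_compf_img // ie -imf.
Qed.

Lemma inHp_inH f : inHp th f <-> inH ep ep f.
Proof. exact: inH_sandwich (inS_ep th l_gt0). Qed.

Lemma inHm_inH f : inHm th f <-> inH em em f.
Proof. exact: inH_sandwich (inS_em th l_gt0). Qed.

Lemma inHmp_inH f : inHmp th f <-> inH em ep f.
Proof. exact: inH_Green (inS_em th l_gt0) (inS_ep th l_gt0). Qed.

Lemma inHpm_inH f : inHpm th f <-> inH ep em f.
Proof. exact: inH_Green (inS_ep th l_gt0) (inS_em th l_gt0). Qed.

Lemma inS2_inH L R : inS2 th (L, R) <-> consecutive th L R /\ inH em ep L /\ inH ep ep R.
Proof. by rewrite /inS2 inHmp_inH inHp_inH. Qed.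

Lemma inS2m_inH L R : inS2m th (L, R) <-> consecutive th L R /\ inH em em L /\ inH ep em R.
Proof. by rewrite /inS2m inHm_inH inHpm_inH. Qed.

Lemma inS2_compf L R k psi : inS2 th (L, R) -> S psi -> eqker psi k ->
  consecutive th (compf L psi) (compf R psi) /\
  inH em k (compf L psi) /\ inH ep k (compf R psi).
Proof.
case/inS2_inH=> hcons [hL hR] Spsi kpsi.
split; first exact: consecutive_compf.
by split; [apply: inH_compf hL Spsi kpsi | apply: inH_compf hR Spsi kpsi].
Qed.

Lemma compf_inj_eqker k phi f g : S k -> img phi = img k ->
  eqker f k -> eqker g k -> compf f phi = compf g phi -> f = g.
Proof.
move=> Sk iphi kf kg efg; have [M [_ ee ie ke]] := idem_powf_inS Sk.
have kfe h : eqker h k -> eqker h (powf M.+1 k) by move=> kh a b; rewrite kh ke.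
rewrite -(compf_idem_eqker ee (kfe _ kf)) -(compf_idem_eqker ee (kfe _ kg)).
apply/ffunP => a; rewrite [LHS]ffunE [RHS]ffunE.
have : powf M.+1 k a \in img phi by rewrite iphi -ie imset_f.
by case/imsetP => b _ ->; move/ffunP: efg => /(_ b); rewrite !ffunE.
Qed.

(* psi := powf M g (k k') with g := k k' phi and powf M.+1 g idempotent, so
   that compf psi phi = powf M.+1 g, whose kernel is that of phi. *)
Lemma exists_right_inverse_eqker k k' phi : S k -> S k' -> S phi -> eqker phi k ->
  exists psi, [/\ S psi, eqker psi k' & forall f, eqker f k -> compf f (compf psi phi) = f].
Proof.
move=> Sk Sk' Sphi kphi; pose psi0 := compf k k'.
have S0 : S psi0 by apply: inS_mul.
have Sg : S (compf psi0 phi) by apply: inS_mul.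
have [M [_ ee _ ke]] := idem_powf_inS Sg.
exists (compf (powf M (compf psi0 phi)) psi0).
have Spsi : S (compf (powf M (compf psi0 phi)) psi0) by apply: inS1_compfl (inS1_powf _ _).
split=> // [a b|f kf].
  by rewrite eqker_compf_inS // eqker_compf_inS.
rewrite -compfA -powfSr compf_idem_eqker // => a b.
by rewrite kf ke eqker_compf_inS // kphi.
Qed.

End Green.

Theorem mainTheorem19 (A : finType) (l : nat) (th : 'I_l -> {ffun A -> A})
  (hl : 1 < l) (hprim : primitive th) (hap : aperiodic th)
  (hqb : quasi_bijective th) (hsf : simplified th) :
  (forall L R psi, inS2 th (L, R) -> inHmp th psi \/ inHp th psi ->
     inS2 th (compf L psi, compf R psi)) /\
  (forall phi, inHpm th phi ->
     [/\ (forall p, inS2 th p -> inS2m th (compf p.1 phi, compf p.2 phi)),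
         (forall p q, inS2 th p -> inS2 th q ->
            (compf p.1 phi, compf p.2 phi) = (compf q.1 phi, compf q.2 phi) -> p = q)
       & (forall q, inS2m th q -> exists p, inS2 th p /\ (compf p.1 phi, compf p.2 phi) = q)]).
Proof.
have l_gt0 : 0 < l by apply: ltnW.
have [[c [hc hrk]] _] := hsf; have rk := inS_rank l_gt0 hc hrk.
have [Sep Sem] := (inS_ep th l_gt0, inS_em th l_gt0).
split=> [L R psi hLR hpsi | phi /(inHpm_inH l_gt0 rk) [Sphi iphi kphi]].
  have [Spsi kpsi] : inS th psi /\ eqker psi (ep th).
    by case: hpsi => [/(inHmp_inH l_gt0 rk) [? _ ?] | /(inHp_inH l_gt0 rk) [? _ ?]].
  by apply/(inS2_inH l_gt0 rk); exact (inS2_compf l_gt0 rk hLR Spsi kpsi).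
split=> [[L R] hLR | [L R] [L' R'] | [L' R'] /(inS2m_inH l_gt0 rk) [hcons [hL' hR']]].
- by apply/(inS2m_inH l_gt0 rk); exact (inS2_compf l_gt0 rk hLR Sphi kphi).
- case/(inS2_inH l_gt0 rk)=> _ [[_ _ kL] [_ _ kR]].
  case/(inS2_inH l_gt0 rk)=> _ [[_ _ kL'] [_ _ kR']] [/= eL eR].
  by rewrite (compf_inj_eqker rk Sep iphi kL kL' eL) (compf_inj_eqker rk Sep iphi kR kR' eR).
- have [psi [Spsi kpsi inv]] := exists_right_inverse_eqker rk Sem Sep Sphi kphi.
  exists (compf L' psi, compf R' psi); split; last first.
    by case: hL' hR' => _ _ kL' [_ _ kR']; rewrite /= -!compfA !inv.
  apply/(inS2_inH l_gt0 rk); split; first exact: consecutive_compf.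
  by split; [exact: (inH_compf rk hL' Spsi kpsi) | exact: (inH_compf rk hR' Spsi kpsi)].
Qed.
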